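(* For every integer $i\ge1$ there exist $R_i^0,\dots,R_i^{i-1}\in\mathrm{End}(\mathbb{R}^n)[X_0,\dots,X_{i-1}]$ such that \[ Q_i^{i+k}=\sum_{j=0}^{i-1}k^jR_i^j\qquad\text{for all integers }k\ge0 \] (with the convention $0^0=1$). Furthermore, $R_i^{i-1}=\dfrac{BP_{i-1}}{(i-1)!}$.
   Context: Let $n\ge1$ and $A,B\in\mathrm{End}(\mathbb{R}^n)$. $\mathrm{End}(\mathbb{R}^n)[X_0,\dots,X_{k-1}]$ denotes polynomials in commuting scalar indeterminates $X_0,\dots,X_{k-1}$ with coefficients in $\mathrm{End}(\mathbb{R}^n)$ (for $k=0$, just $\mathrm{End}(\mathbb{R}^n)$), and $\mathrm{End}(\mathbb{R}^n)[(X_k)_{k\in\mathbb{N}}]$ is the union of these. Define the linear map $\Psi$ on $\mathrm{End}(\mathbb{R}^n)[(X_k)_{k\in\mathbb{N}}]$ by $\Psi(P)(X_0,\dots,X_k)=P(X_0,\dots,X_{k-1})(A+X_0B)+\sum_{i=0}^{k-1}\frac{\partial P}{\partial X_i}(X_0,\dots,X_{k-1})X_{i+1}$, where $k=\min\{\ell\in\mathbb{N}:P\in\mathrm{End}(\mathbb{R}^n)[X_0,\dots,X_{\ell-1}]\}$. Define $P_0=I$ (identity) and $P_{k+1}=\Psi(P_k)$ for $k\in\mathbb{N}$, so $P_k\in\mathrm{End}(\mathbb{R}^n)[X_0,\dots,X_{k-1}]$. For integers $1\le i\le k$ let $Q_i^k=\partial P_k/\partial X_{k-i}$. *)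

From mathcomp Require Import all_boot all_order all_algebra.
From mathcomp Require Import reals.
From mathcomp Require Import mpoly.
Set Implicit Arguments. Unset Strict Implicit. Unset Printing Implicit Defensive.
Import GRing.Theory.
Local Open Scope ring_scope.

(* End(R^d) with d = n.+1 (so d >= 1) is represented by 'M[R]_(n.+1);
   End(R^d)[X_0,...,X_{k-1}] is {mpoly 'M[R]_(n.+1)[k]}. *)
Section Defs.
Context (R : realType) (n : nat).
Local Notation M := 'M[R]_n.+1.

Definition membed (m N : nat) (h : (m <= N)%N) (p : {mpoly M[m]}) : {mpoly M[N]} :=
  mmap (@mpolyC _ _) (fun j : 'I_m => 'X_(widen_ord h j)) p.

(* partial derivative w.r.t. X_j (zero if j >= number of variables,
   i.e. if the polynomial does not involve X_j) *)
Definition pderiv (k j : nat) (p : {mpoly M[k]}) : {mpoly M[k]} :=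
  match insub j with Some o => p^`M(o) | None => 0 end.

Definition Psi (A B : M) (k : nat) (P : {mpoly M[k]}) : {mpoly M[k.+1]} :=
  mwiden P * (A%:MP + 'X_(@ord0 k) * B%:MP)
  + \sum_(i < k) mwiden (P^`M(i)) * 'X_(lift ord0 i).

Fixpoint Pk (A B : M) (k : nat) : {mpoly M[k]} :=
  match k with
  | 0 => 1
  | k'.+1 => Psi A B (Pk A B k')
  end.

Definition Qk (A B : M) (i k : nat) : {mpoly M[k]} := pderiv (k - i) (Pk A B k).

End Defs.

From HB Require Import structures.
From mathcomp Require Import all_boot all_order all_algebra.
From mathcomp Require Import reals.
From mathcomp Require Import mpoly.
Import GRing.Theory Num.Theory.
Local Open Scope ring_scope.
Set Implicit Arguments. Unset Strict Implicit.

(* Differentiating P_(m+1) = Psi(P_m) with respect to X_(m-i) gives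
   Q_(i+1)^(m+1) = Psi(Q_i^m) + Q_(i+1)^m, since in Psi only the terms
   (dP/dX_j) X_(j+1) shift the variable index.  By induction on i, this
   recursion and Pascal's rule show Q_i^(i+k) = sum_(j<i) binom(k, j) U_i^j
   with coefficients U_i^j independent of k, the top one being B P_(i-1).
   Expanding binom(k, j) = k (k-1) ... (k-j+1) / j! in powers of k yields the
   R_i^l, and the leading coefficient 1/(i-1)! of binom(k, i-1) gives
   R_i^(i-1) = B P_(i-1) / (i-1)!. *)

Section BinomialBasis.
Variable F : numFieldType.

Definition binom_poly (j : nat) : {poly F} :=
  (j`!%:R)^-1 *: \prod_(0 <= t < j) ('X - t%:R%:P).

Lemma size_prod_XsubC_nat j : size (\prod_(0 <= t < j) ('X - (t%:R : F)%:P)) = j.+1.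
Proof. by rewrite size_prod_XsubC size_iota subn0. Qed.

Lemma size_binom_poly j : (size (binom_poly j) <= j.+1)%N.
Proof. by rewrite (leq_trans (size_scale_leq _ _)) // size_prod_XsubC_nat. Qed.

Lemma coef_binom_poly_top j : (binom_poly j)`_j = (j`!%:R)^-1.
Proof.
have := lead_coef_prod_XsubC (index_iota 0 j) xpredT (fun t : nat => (t%:R : F)).
by rewrite coefZ lead_coefE size_prod_XsubC_nat => ->; rewrite mulr1.
Qed.

Lemma binom_polyE j k : (binom_poly j).[k%:R] = 'C(k, j)%:R.
Proof.
have ffactE : \prod_(0 <= t < j) (k%:R - t%:R : F) = (k ^_ j)%:R.
  elim: j => [|j IHj]; first by rewrite big_nil.
  rewrite big_nat_recr //= IHj ffactnSr natrM.
  by case: (ltnP k j) => [/ffact_small->|/natrB->]; rewrite ?mul0r.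
rewrite hornerZ horner_prod (eq_bigr _ (fun t _ => hornerXsubC _ _)) ffactE.
by rewrite -bin_ffact natrM mulrC mulfK // pnatr_eq0 -lt0n fact_gt0.
Qed.

Variables (S : lalgType F) (V : lmodType S).

Definition power_coefs (i : nat) (v : nat -> V) (l : nat) : V :=
  \sum_(j < i) ((binom_poly j)`_l)%:A *: v j.

Lemma sum_binomial_powers i k (v : nat -> V) :
  \sum_(j < i) v j *+ 'C(k, j) = \sum_(l < i) power_coefs i v l *+ (k ^ l).
Proof.
under [RHS]eq_bigr do rewrite -sumrMnl.
rewrite exchange_big /=; apply: eq_bigr => j _.
rewrite -scaler_nat -[_%:R]scaler_nat -binom_polyE.
rewrite (horner_coef_wide _ (leq_trans (size_binom_poly j) (ltn_ord j))).
rewrite scaler_suml scaler_suml; apply: eq_bigr => l _.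
by rewrite -natrX mulr_natr !scalerMnl.
Qed.

Lemma power_coefs_top i (v : nat -> V) : power_coefs i.+1 v i = (i`!%:R^-1)%:A *: v i.
Proof.
rewrite /power_coefs big_ord_recr /= coef_binom_poly_top big1 ?add0r // => j _.
by rewrite nth_default ?scale0r ?scaler0 // (leq_trans (size_binom_poly j)).
Qed.
End BinomialBasis.

Lemma sumr_mul_delta (T : pzSemiRingType) k (F : 'I_k -> T) (o : 'I_k) :
  \sum_(i < k) F i * (i == o)%:R = F o.
Proof.
by rewrite (bigD1 o) //= eqxx mulr1 big1 ?addr0 // => i /negbTE ->; rewrite mulr0.
Qed.

Lemma sum_pascal (V : zmodType) (i k : nat) (v w : nat -> V) :
  w i = 0 -> (forall l, v l.+1 = w l + w l.+1) ->
  \sum_(l < i.+1) v l *+ 'C(k.+1, l) =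
  \sum_(l < i.+1) v l *+ 'C(k, l) + \sum_(l < i) w l *+ 'C(k.+1, l).
Proof.
move=> wi0 vS.
have sum_w_ext (c : nat -> nat) : \sum_(l < i) w l *+ c l = \sum_(l < i.+1) w l *+ c l.
  by rewrite big_ord_recr /= wi0 mul0rn addr0.
rewrite !big_ord_recl /= !bin0 !mulr1n.
under eq_bigr => l _ do rewrite binS mulrnDr.
rewrite big_split /= -!addrA; congr (_ + (_ + _)).
under eq_bigr => l _ do rewrite /bump leq0n add1n vS mulrnDl.
rewrite big_split /= (sum_w_ext (fun l => 'C(k, l))) (sum_w_ext (fun l => 'C(k.+1, l))).
rewrite !big_ord_recl /= !bin0 !mulr1n -addrA; congr (_ + _).
by rewrite -big_split /=; apply: eq_bigr => l _; rewrite binS mulrnDr.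
Qed.

Section MPolyRing.
Variables (T : nzRingType) (k : nat).

Lemma mpoly_ring_ind (P : {mpoly T[k]} -> Prop) :
  (forall c, P c%:MP) -> (forall i, P 'X_i) ->
  (forall p q, P p -> P q -> P (p + q)) ->
  (forall p q, P p -> P q -> P (p * q)) ->
  forall p, P p.
Proof.
move=> PC PX PD PM p; rewrite [p]mpolyE.
apply: (big_ind P _ (PD)) => [|m _]; first by rewrite -mpolyC0.
rewrite -mul_mpolyC mpolyXE_id; apply: (PM) => //.
apply: (big_ind P _ (PM)) => [|i _]; first by rewrite -mpolyC1.
by elim: (m i) => [|e IHe]; rewrite ?expr0 -?mpolyC1 // exprS; apply: (PM).
Qed.

Lemma mpoly_rmorph_ext (S : nzRingType) (f g : {rmorphism {mpoly T[k]} -> S}) :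
  (forall c, f c%:MP = g c%:MP) -> (forall i, f 'X_i = g 'X_i) -> f =1 g.
Proof.
move=> eqC eqX; elim/mpoly_ring_ind => // [p q|p q] eq_p eq_q.
  by rewrite !rmorphD eq_p eq_q.
by rewrite !rmorphM eq_p eq_q.
Qed.

Lemma mderivXU (i j : 'I_k) : ('X_i : {mpoly T[k]})^`M(j) = (i == j)%:R.
Proof.
rewrite mderivX mnm1E; have [->|_] := eqVneq i j; last by rewrite scale0r.
by rewrite -{1}[U_(j)%MM]add0m addmK mpolyX0 scale1r.
Qed.

Lemma mderivM_constr (i : 'I_k) (p q : {mpoly T[k]}) :
  q^`M(i) = 0 -> (p * q)^`M(i) = p^`M(i) * q.
Proof. by move=> dq; rewrite mderivM dq mulr0 addr0. Qed.

End MPolyRing.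

Lemma mderiv_rmorph (T : nzRingType) a N
    (f : {rmorphism {mpoly T[a]} -> {mpoly T[N]}})
    (o : 'I_N) (d : {mpoly T[a]} -> {mpoly T[a]}) :
  {morph d : p q / p + q} -> (forall p q, d (p * q) = d p * q + p * d q) ->
  (forall c, (f c%:MP)^`M(o) = f (d c%:MP)) ->
  (forall i, (f 'X_i)^`M(o) = f (d 'X_i)) ->
  forall p, (f p)^`M(o) = f (d p).
Proof.
move=> dD dM dC dX; elim/mpoly_ring_ind => // p q IHp IHq.
  by rewrite dD !rmorphD mderivD IHp IHq.
by rewrite dM rmorphD !rmorphM mderivM IHp IHq.
Qed.

Section Embedding.
Variables (R : realType) (n : nat).
Local Notation M := 'M[R]_n.+1.

Section Membed.
Variables (a N : nat) (h : (a <= N)%N).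

Lemma membed_is_zmod_morphism : zmod_morphism (@membed R n a N h).
Proof. exact: mmap_is_additive. Qed.

HB.instance Definition _ :=
  GRing.isZmodMorphism.Build {mpoly M[a]} {mpoly M[N]} (@membed R n a N h)
    membed_is_zmod_morphism.

Lemma membed_is_monoid_morphism : monoid_morphism (@membed R n a N h).
Proof.
suff [membedM membed1] :
    {morph @membed R n a N h : p q / p * q} * (@membed R n a N h 1 = 1).
  by split.
apply: commr_mmap_is_multiplicative => [i p|p m m']; first exact/commr_mpolyX.
rewrite /= /mmap1; elim/big_rec: _ => /= [|i q _]; first exact/commr1.
exact/commrM/commrX/commr_mpolyX.
Qed.

HB.instance Definition _ :=
  GRing.isMonoidMorphism.Build {mpoly M[a]} {mpoly M[N]} (@membed R n a N h)
    membed_is_monoid_morphism.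

Lemma membedC (c : M) : membed h c%:MP = c%:MP.
Proof. by rewrite /membed mmapC. Qed.

Lemma membedX (i : 'I_a) : membed h ('X_i : {mpoly M[a]}) = 'X_(widen_ord h i).
Proof. by rewrite /membed mmapX mmap1U. Qed.

End Membed.

Lemma membed_comp a b c (hab : (a <= b)%N) (hbc : (b <= c)%N) (hac : (a <= c)%N)
    (p : {mpoly M[a]}) :
  membed hbc (membed hab p) = membed hac p.
Proof.
apply: (mpoly_rmorph_ext (f := membed hbc \o membed hab)) => [d|i] /=.
  by rewrite !membedC.
by rewrite !membedX; apply: (congr1 (fun j => 'X_j)); apply: val_inj.
Qed.

Lemma membed_id a (h : (a <= a)%N) (p : {mpoly M[a]}) : membed h p = p.
Proof.
apply: (mpoly_rmorph_ext (g := idfun)) => [d|i] /=; first by rewrite membedC.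
by rewrite membedX; apply: (congr1 (fun j => 'X_j)); apply: val_inj.
Qed.

Lemma mwidenE_membed a (p : {mpoly M[a]}) : mwiden p = membed (leqnSn a) p.
Proof.
apply: (mpoly_rmorph_ext (f := @mwiden a M) (g := membed (leqnSn a))) => [d|i] /=.
  by rewrite membedC mwidenC.
rewrite membedX /mwiden mmapX mmap1U.
by apply: (congr1 (fun j => 'X_j)); apply: val_inj.
Qed.

Lemma mwiden_membed a N (h : (a <= N)%N) (h' : (a <= N.+1)%N) (p : {mpoly M[a]}) :
  mwiden (membed h p) = membed h' p.
Proof. by rewrite mwidenE_membed membed_comp. Qed.

Lemma pderivE k (o : 'I_k) (p : {mpoly M[k]}) : pderiv o p = p^`M(o).
Proof. by rewrite /pderiv; case: insubP => [o' _ /val_inj -> | ]; rewrite ?ltn_ord. Qed.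

Lemma pderiv_out k j (p : {mpoly M[k]}) : (k <= j)%N -> pderiv j p = 0.
Proof. by move=> le_kj; rewrite /pderiv insubF // ltnNge le_kj. Qed.

Lemma pderiv_mderiv k j (o : 'I_k) (p : {mpoly M[k]}) :
  pderiv j p^`M(o) = (pderiv j p)^`M(o).
Proof.
by rewrite /pderiv; case: insubP => [o' _ _|_]; [exact: mderiv_comm | rewrite mderiv0].
Qed.

Lemma pderivD k j : {morph @pderiv R n k j : p q / p + q}.
Proof.
by move=> p q; rewrite /pderiv; case: insubP => [o _ _|_]; rewrite ?mderivD ?addr0.
Qed.

Lemma pderivM k j (p q : {mpoly M[k]}) :
  pderiv j (p * q) = pderiv j p * q + p * pderiv j q.
Proof.
by rewrite /pderiv; case: insubP => [o _ _|_]; rewrite ?mderivM ?mul0r ?mulr0 ?addr0.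
Qed.

Lemma pderivC k j (c : M) : pderiv j (c%:MP : {mpoly M[k]}) = 0.
Proof. by rewrite /pderiv; case: insubP => [o _ _|_]; rewrite ?mderivC. Qed.

Lemma pderivXU k j (i : 'I_k) : pderiv j ('X_i : {mpoly M[k]}) = (val i == j)%:R.
Proof.
rewrite /pderiv; case: insubP => [o _ <-|]; first by rewrite mderivXU.
by rewrite -leqNgt => le_kj; rewrite ltn_eqF // (leq_trans (ltn_ord i)).
Qed.

Lemma mderiv_membed a N (h : (a <= N)%N) (o : 'I_N) (p : {mpoly M[a]}) :
  (membed h p)^`M(o) = membed h (pderiv o p).
Proof.
apply: (mderiv_rmorph (f := membed h) (d := pderiv o)) => [|p' q'|c|i].
- exact: pderivD.
- exact: pderivM.
- by rewrite /= membedC mderivC pderivC rmorph0.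
- by rewrite /= membedX mderivXU pderivXU rmorph_nat.
Qed.

Lemma mderiv_mwiden k (o : 'I_k.+1) (p : {mpoly M[k]}) :
  (mwiden p)^`M(o) = mwiden (pderiv o p).
Proof. by rewrite !mwidenE_membed mderiv_membed. Qed.

End Embedding.

Section PsiTheory.
Variables (R : realType) (n : nat) (A B : 'M[R]_n.+1).
Local Notation M := 'M[R]_n.+1.
Local Notation L k := (A%:MP + 'X_(@ord0 k) * B%:MP : {mpoly M[k.+1]}).

Lemma PsiD k (p q : {mpoly M[k]}) : Psi A B (p + q) = Psi A B p + Psi A B q.
Proof.
rewrite /Psi mwidenD mulrDl addrACA -big_split /=; congr (_ + _).
by apply: eq_bigr => i _; rewrite mderivD mwidenD mulrDl.
Qed.

Lemma PsiZ k (c : M) (p : {mpoly M[k]}) : Psi A B (c *: p) = c *: Psi A B p.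
Proof.
rewrite /Psi mwidenZ scalerDr -scalerAl scaler_sumr; congr (_ + _).
by apply: eq_bigr => i _; rewrite mderivZ mwidenZ scalerAl.
Qed.

Lemma Psi_is_zmod_morphism k : zmod_morphism (@Psi R n A B k).
Proof. by move=> p q; rewrite PsiD -scaleN1r PsiZ scaleN1r. Qed.

HB.instance Definition _ (k : nat) :=
  GRing.isZmodMorphism.Build {mpoly M[k]} {mpoly M[k.+1]} (@Psi R n A B k)
    (@Psi_is_zmod_morphism k).

Lemma membed_L a N (h : (a.+1 <= N.+1)%N) : membed h (L a) = L N.
Proof.
rewrite rmorphD rmorphM /= !membedC membedX.
by congr (_ + 'X__ * _); apply: val_inj.
Qed.

Lemma membed_mwiden a N (h : (a <= N)%N) (h' : (a.+1 <= N.+1)%N)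
    (p : {mpoly M[a]}) :
  membed h' (mwiden p) = mwiden (membed h p).
Proof.
by rewrite !mwidenE_membed !(@membed_comp _ _ a _ _ _ _ (leq_trans h (leqnSn N))).
Qed.

Lemma Psi_membed a N (h : (a <= N)%N) (h' : (a.+1 <= N.+1)%N)
    (p : {mpoly M[a]}) :
  Psi A B (membed h p) = membed h' (Psi A B p).
Proof.
rewrite /Psi rmorphD rmorphM /= membed_L (membed_mwiden h); congr (_ + _).
rewrite rmorph_sum /= (bigID (fun i : 'I_N => (i < a)%N)) /=.
rewrite [X in _ + X]big1 ?addr0 => [|i]; last first.
  by rewrite -leqNgt => le_ai; rewrite mderiv_membed pderiv_out // !rmorph0 mul0r.
rewrite (big_ord_narrow h) /=; apply: eq_bigr => i _.
rewrite rmorphM /= membedX (membed_mwiden h) mderiv_membed pderivE.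
by congr (_ * 'X__); apply: val_inj.
Qed.

Lemma pderivS_Psi k j (p : {mpoly M[k]}) :
  pderiv j.+1 (Psi A B p) = Psi A B (pderiv j.+1 p) + mwiden (pderiv j p).
Proof.
have [lt_jk|le_kj] := ltnP j k; last first.
  by rewrite !pderiv_out ?raddf0 ?mwiden0 ?addr0 // ltnW.
pose o := Ordinal lt_jk; set o' := lift ord0 o.
rewrite [j.+1]/(val o') [j]/(val o) !pderivE.
have dL : (L k)^`M(o') = 0.
  rewrite mderivD mderivM !mderivC mulr0 addr0 mderivXU.
  by rewrite (negbTE (neq_lift _ _)) mul0r add0r.
have dP : (mwiden p * L k)^`M(o') = mwiden (pderiv o' p) * L k.
  by rewrite (mderivM_constr _ dL) mderiv_mwiden.
have dX i : (mwiden p^`M(i) * 'X_(lift ord0 i))^`M(o') =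
    mwiden (pderiv o' p)^`M(i) * 'X_(lift ord0 i) + mwiden p^`M(i) * (i == o)%:R.
  by rewrite mderivM mderivXU (inj_eq (@lift_inj _ ord0)) mderiv_mwiden pderiv_mderiv.
have sum_o : \sum_(i < k) mwiden p^`M(i) * (i == o)%:R = mwiden p^`M(o).
  exact: sumr_mul_delta.
rewrite {1}/Psi mderivD dP raddf_sum (eq_bigr _ (fun i _ => dX i)).
by rewrite big_split sum_o addrA.
Qed.

End PsiTheory.

Section BinomialExpansion.
Variables (R : realType) (n : nat) (A B : 'M[R]_n.+1).
Local Notation M := 'M[R]_n.+1.

Lemma Qk0 m : Qk A B 0 m = 0.
Proof. by rewrite /Qk subn0 pderiv_out. Qed.

Lemma QkS i m : (i < m)%N ->
  Qk A B i.+1 m.+1 = Psi A B (Qk A B i m) + mwiden (Qk A B i.+1 m).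
Proof. by move=> lt_im; rewrite /Qk subSS -(subnSK lt_im) pderivS_Psi. Qed.

Lemma Qk11 : Qk A B 1 1 = B%:MP.
Proof.
rewrite /Qk subnn (pderivE (ord0 : 'I_1)) /= /Psi big_ord0 addr0 mwiden1 mul1r.
by rewrite mderivD mderivC add0r mderivM mderivC mulr0 addr0 mderivXU eqxx mul1r.
Qed.

Fixpoint Qk_coef (i : nat) : nat -> {mpoly M[i]} :=
  match i with
  | 0 => fun=> 0
  | i'.+1 => fun l =>
      if l is l'.+1 then Psi A B (Qk_coef i' l') + Psi A B (Qk_coef i' l)
      else Qk A B i'.+1 i'.+1
  end.

Lemma Qk_coefS i l :
  Qk_coef i.+1 l.+1 = Psi A B (Qk_coef i l) + Psi A B (Qk_coef i l.+1).
Proof. by []. Qed.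

Lemma Qk_coef_eq0 i l : (i <= l)%N -> Qk_coef i l = 0.
Proof.
elim: i l => [//|i IHi] [//|l] lt_il.
by rewrite Qk_coefS !IHi ?raddf0 ?addr0 // ltnW.
Qed.

Lemma Qk_coef_top i (h : (i <= i.+1)%N) : Qk_coef i.+1 i = B *: membed h (Pk A B i).
Proof.
elim: i h => [|i IHi] h; first by rewrite /= Qk11 rmorph1 -mul_mpolyC mulr1.
rewrite Qk_coefS (IHi (leqnSn i)) Qk_coef_eq0 // raddf0 addr0 PsiZ.
by rewrite (Psi_membed _ _ _ h).
Qed.

Lemma Qk_binomial i m (h : (i <= m)%N) :
  Qk A B i m = membed h (\sum_(j < i) Qk_coef i j *+ 'C(m - i, j)).
Proof.
elim: i m h => [|i IHi] m h; first by rewrite Qk0 big_ord0 rmorph0.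
elim: m h => [//|m IHm] h.
have [eq_im|ne_im] := eqVneq i m.
  subst m; rewrite subnn big_ord_recl big1 => [|l _]; last first.
    by rewrite bin_small ?mulr0n.
  by rewrite bin0 mulr1n addr0 membed_id.
have lt_im : (i < m)%N by rewrite ltn_neqAle ne_im.
rewrite QkS // (IHi m (ltnW lt_im)) (IHm lt_im) (Psi_membed _ _ _ h).
rewrite (mwiden_membed _ h) -rmorphD raddf_sum /= subSS -(subnSK lt_im).
have w0 : Psi A B (Qk_coef i i) = 0 by rewrite Qk_coef_eq0 ?raddf0.
congr (membed h _); rewrite addrC (sum_pascal _ w0 (Qk_coefS i)).
by congr (_ + _); apply: eq_bigr => j _; rewrite raddfMn.
Qed.

End BinomialExpansion.

Theorem lemma1 (R : realType) (n : nat) (A B : 'M[R]_n.+1) (i : nat) :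
  (0 < i)%N ->
  exists Rs : nat -> {mpoly 'M[R]_n.+1[i]},
    (forall k : nat,
        Qk A B i (i + k) =
        \sum_(0 <= j < i) membed (leq_addr k i) (Rs j) *+ (k ^ j)%N)
    /\ Rs i.-1 =
       (((i.-1)`!)%:R^-1 : R)%:M%:MP * (B%:MP * membed (leq_pred i) (Pk A B i.-1)).
Proof.
case: i => // i _.
exists (power_coefs i.+1 (Qk_coef A B i.+1)); split => [k|].
  rewrite (Qk_binomial A B (leq_addr k i.+1)) addKn sum_binomial_powers big_mkord.
  by rewrite rmorph_sum; apply: eq_bigr => l _; rewrite rmorphMn.
rewrite power_coefs_top (@Qk_coef_top _ _ A B i (leq_pred i.+1)).
by rewrite !mul_mpolyC scalemx1.
Qed.
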